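(* Let $Q$ be a $G$-admissible quiver, with extended exchange matrix $\tilde B=\tilde B(Q)$. Let $K$ be a mutable $G$-orbit such that the quiver $\mu_K(Q)$ is also $G$-admissible. Then $(\mu_K(\tilde B))^G=\mu_K(\tilde B^G)$, where on the left $\mu_K=\prod_{k\in K}\mu_k$ is the composition of the mutations of $\tilde B$ at all indices of $K$, and on the right $\mu_K$ is the single matrix mutation of $\tilde B^G$ at the index $K$.
   Context: $Q$ is a quiver (no loops, no oriented 2-cycles) with vertices $1,\dots,m$, where $1,\dots,n$ are mutable and $n+1,\dots,m$ frozen (there are no arrows between frozen vertices). Its extended exchange matrix $\tilde B(Q)=(b_{ij})$ is the $m\times n$ matrix with $b_{ij}$ = (number of arrows $i\to j$) $-$ (number of arrows $j\to i$). Matrix mutation at mutable $k$: $b'_{ij}=-b_{ij}$ if $k\in\{i,j\}$, and $b'_{ij}=b_{ij}+\mathrm{sgn}(b_{ik})\max(b_{ik}b_{kj},0)$ otherwise; quiver mutation $\mu_k$ corresponds to this. A group $G$ acts on $\{1,\dots,m\}$; write $i\sim i'$ if $i,i'$ lie in the same $G$-orbit. $Q$ (or $\tilde B(Q)$) is $G$-admissible if: (1) for $i\sim i'$, $i$ is mutable iff $i'$ is; (2) $b_{ij}=b_{g(i),g(j)}$ for all $i,j$ and $g\in G$; (3) $b_{ii'}=0$ for mutable $i\sim i'$; (4) $b_{ij}b_{i'j}\ge0$ for $i\sim i'$ and mutable $j$. For $G$-admissible $Q$, orbits are mutable or frozen, and $\tilde B^G=(b^G_{IJ})$ is the matrix with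 rows indexed by $G$-orbits and columns by mutable $G$-orbits, $b^G_{IJ}=\sum_{i\in I}b_{ij}$ for any $j\in J$. By condition (3), the mutations $\mu_k$, $k\in K$, commute, so $\mu_K$ is well defined. *)

From mathcomp Require Import all_boot all_order all_algebra all_fingroup.
Set Implicit Arguments. Unset Strict Implicit. Unset Printing Implicit Defensive.
Import Order.TTheory GRing.Theory Num.Theory.
Local Open Scope ring_scope.

(* Vertices are 'I_m; vertex i is mutable iff (val i < n) (the paper's 1..n,
   shifted to 0..n-1).  An extended exchange matrix is B : 'M[int]_(m, n),
   column j : 'I_n corresponding to the mutable vertex widen_ord hnm j. *)

(* b_{ij} for two vertices i j : 'I_m (j mutable; 0 by convention otherwise) *)
Definition ent (n m : nat) (B : 'M[int]_(m, n)) (i j : 'I_m) : int :=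
  oapp (fun j' : 'I_n => B i j') 0 (insub (val j) : option 'I_n).

Definition mut (n m : nat) (hnm : (n <= m)%N) (B : 'M[int]_(m, n)) (k : 'I_n)
  : 'M[int]_(m, n) :=
  \matrix_(i < m, j < n)
    if (i == widen_ord hnm k) || (j == k) then - B i j
    else B i j + (sgz (B i k) * Num.max (B i k * B (widen_ord hnm k) j) 0).

Definition mutv (n m : nat) (hnm : (n <= m)%N) (B : 'M[int]_(m, n)) (k : 'I_m)
  : 'M[int]_(m, n) :=
  oapp (mut hnm B) B (insub (val k) : option 'I_n).

Definition mutK (n m : nat) (hnm : (n <= m)%N) (B : 'M[int]_(m, n))
  (K : {set 'I_m}) : 'M[int]_(m, n) :=
  foldr (fun k C => mutv hnm C k) B (enum K).

Definition admissible (n m : nat) (G : {group {perm 'I_m}}) (B : 'M[int]_(m, n))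
  : Prop :=
  [/\ (forall (g : {perm 'I_m}) (i : 'I_m), g \in G -> (g i < n)%N = (i < n)%N),
      (forall (g : {perm 'I_m}) (i j : 'I_m), g \in G -> (j < n)%N ->
          ent B i j = ent B (g i) (g j)),
      (forall i i' : 'I_m, (i < n)%N -> i' \in orbit 'P G i -> ent B i i' = 0) &
      (forall i i' j : 'I_m, i' \in orbit 'P G i -> (j < n)%N ->
          0 <= ent B i j * ent B i' j)].

Definition orbitsG (m : nat) (G : {group {perm 'I_m}}) : {set {set 'I_m}} :=
  [set orbit 'P G i | i in [set: 'I_m]].
Definition mut_orbitsG (n m : nat) (G : {group {perm 'I_m}}) : {set {set 'I_m}} :=
  [set orbit 'P G j | j in [set j : 'I_m | (j < n)%N]].

(* B^G_{IJ} = sum_{i in I} b_{ij} for (any) j in J; we take j := [pick j in J]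
   (J is a nonempty orbit in the statement) *)
Definition BG (n m : nat) (B : 'M[int]_(m, n)) (I J : {set 'I_m}) : int :=
  \sum_(i in I) oapp (ent B i) 0 [pick j in J].

Definition mutG (T : Type) (eqT : T -> T -> bool) (b : T -> T -> int) (K : T)
  (I J : T) : int :=
  if eqT I K || eqT J K then - b I J
  else b I J + (sgz (b I K) * Num.max (b I K * b K J) 0).

From mathcomp Require Import all_boot all_order all_algebra all_fingroup.
Import Order.TTheory GRing.Theory Num.Theory.
Local Open Scope ring_scope.

(* Since K is an orbit of pairwise unconnected mutable vertices, the mutations
   at its elements do not interact: mu_K negates the rows and columns through K
   and adds sum_(k in K) sgn(b_ik) [b_ik b_kj]_+ to every other entry b_ij.  The
   correction term (x, y) |-> sgn(x) [x y]_+ is additive in each argument along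
   sign-coherent families.  Admissibility makes every column (b_ik)_(i in I) and
   the row segment (b_kj)_(k in K) sign-coherent, and the column sums over I
   constant along K, so summing over i in I collapses the double sum to
   sgn(b^G_IK) [b^G_IK b^G_KJ]_+. *)

Definition mut_term (x y : int) : int := sgz x * Num.max (x * y) 0.

Lemma mut_term0l y : mut_term 0 y = 0.
Proof. by rewrite /mut_term sgz0 mul0r. Qed.

Lemma mut_term_ge0 x y : 0 <= x -> mut_term x y = x * Num.max y 0.
Proof.
rewrite le_eqVlt => /predU1P[<-|x_gt0]; first by rewrite mut_term0l mul0r.
by rewrite /mut_term gtr0_sgz // mul1r maxr_pMr ?mulr0 // ltW.
Qed.

Lemma mut_term_le0 x y : x <= 0 -> mut_term x y = x * Num.max (- y) 0.
Proof.
rewrite le_eqVlt => /predU1P[->|x_lt0]; first by rewrite mut_term0l mul0r.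
rewrite /mut_term ltr0_sgz // mulN1r -mulrNN -[X in Num.max _ X](mulr0 (- x)).
by rewrite -maxr_pMr ?oppr_ge0 ?ltW // mulNr opprK.
Qed.

Lemma mut_termC x y : mut_term x y = mut_term y x.
Proof.
have [x0|x0] := lerP 0 x; have [y0|y0] := lerP 0 y.
- by rewrite !mut_term_ge0 // !max_l // mulrC.
- by rewrite mut_term_ge0 // mut_term_le0 ?ltW // !max_r ?mulr0 ?oppr_le0 // ltW.
- by rewrite mut_term_le0 ?ltW // mut_term_ge0 // !max_r ?mulr0 ?oppr_le0 // ltW.
- by rewrite !mut_term_le0 ?ltW // !max_l ?oppr_ge0 ?ltW // !mulrN mulrC.
Qed.

Lemma mut_term0r x : mut_term x 0 = 0.
Proof. by rewrite mut_termC mut_term0l. Qed.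

Definition sign_coherent {R : numDomainType} {T : finType} (A : {set T})
    (x : T -> R) :=
  {in A &, forall p q, 0 <= x p * x q}.

Lemma sign_coherent_split {R : realDomainType} {T : finType} {A : {set T}}
    {x : T -> R} :
  sign_coherent A x -> {in A, forall p, 0 <= x p} \/ {in A, forall p, x p <= 0}.
Proof.
move=> coh; have [x_ge0|] := boolP [forall p in A, 0 <= x p].
  by left=> p pA; exact: (forall_inP x_ge0).
case/forall_inPn=> q qA; rewrite -ltNge => xq_lt0.
by right=> p pA; rewrite -(nmulr_lge0 _ xq_lt0) coh.
Qed.

Lemma mut_term_suml {T : finType} {A : {set T}} {x : T -> int} y :
  sign_coherent A x ->
  \sum_(p in A) mut_term (x p) y = mut_term (\sum_(p in A) x p) y.
Proof.
case/sign_coherent_split=> [x_ge0|x_le0].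
  rewrite mut_term_ge0 ?sumr_ge0 // mulr_suml.
  by apply: eq_bigr => p pA; rewrite mut_term_ge0 ?x_ge0.
rewrite mut_term_le0 ?sumr_le0 // mulr_suml.
by apply: eq_bigr => p pA; rewrite mut_term_le0 ?x_le0.
Qed.

Lemma mut_term_sumr {T : finType} {A : {set T}} x {y : T -> int} :
  sign_coherent A y ->
  \sum_(p in A) mut_term x (y p) = mut_term x (\sum_(p in A) y p).
Proof.
move=> coh; rewrite mut_termC -mut_term_suml //.
by apply: eq_bigr => p _; rewrite mut_termC.
Qed.

Lemma sum_mut_term (T1 T2 : finType) (A : {set T1}) (C : {set T2})
    (x : T1 -> T2 -> int) (y : T2 -> int) c0 :
  c0 \in C ->
  {in C, forall c, \sum_(a in A) x a c = \sum_(a in A) x a c0} ->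
  {in C, forall c, sign_coherent A (x^~ c)} ->
  sign_coherent C y ->
  \sum_(a in A) \sum_(c in C) mut_term (x a c) (y c)
    = mut_term (\sum_(a in A) x a c0) (\sum_(c in C) y c).
Proof.
move=> c0C col_sum col_coh y_coh.
rewrite exchange_big /= -(mut_term_sumr _ y_coh).
by apply: eq_bigr => c cC; rewrite (mut_term_suml _ (col_coh c cC)) col_sum.
Qed.

Section MatrixMutation.

Context {n m : nat} (hnm : (n <= m)%N).

Lemma ent_widen (C : 'M[int]_(m, n)) i (j : 'I_n) :
  ent C i (widen_ord hnm j) = C i j.
Proof. by rewrite /ent /= valK. Qed.

Lemma ent_frozen (C : 'M[int]_(m, n)) i (j : 'I_m) : (n <= j)%N -> ent C i j = 0.
Proof. by move=> jn; rewrite /ent insubF // ltnNge jn. Qed.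

Lemma mutv_widen (C : 'M[int]_(m, n)) (k : 'I_n) :
  mutv hnm C (widen_ord hnm k) = mut hnm C k.
Proof. by rewrite /mutv /= valK. Qed.

Lemma ent_mutv (C : 'M[int]_(m, n)) (k i j : 'I_m) : (k < n)%N ->
  ent (mutv hnm C k) i j =
    if (i == k) || (j == k) then - ent C i j
    else ent C i j + mut_term (ent C i k) (ent C k j).
Proof.
move=> kn; have <- : widen_ord hnm (Ordinal kn) = k by apply: val_inj.
have [jn|nj] := ltnP j n; last first.
  have /negPf-> : j != widen_ord hnm (Ordinal kn).
    by apply: contraTneq nj => ->; rewrite -ltnNge.
  by rewrite !(ent_frozen _ _ _ nj) mut_term0r oppr0 addr0 if_same.
have <- : widen_ord hnm (Ordinal jn) = j by apply: val_inj.
by rewrite mutv_widen !ent_widen mxE.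
Qed.

Lemma ent_foldr_mutv (B : 'M[int]_(m, n)) (s : seq 'I_m) :
  uniq s -> {in s, forall k : 'I_m, (k < n)%N} -> {in s &, forall a b, ent B a b = 0} ->
  forall i j, ent (foldr (fun k C => mutv hnm C k) B s) i j =
    if (i \in s) || (j \in s) then - ent B i j
    else ent B i j + \sum_(k <- s) mut_term (ent B i k) (ent B k j).
Proof.
elim: s => [|k s IH] /=; first by move=> *; rewrite big_nil addr0.
move=> /andP[ks s_uniq] s_mut s_indep i j.
have sub_s : {subset s <= k :: s} by move=> a aS; rewrite in_cons aS orbT.
have {}IH := IH s_uniq (sub_in1 sub_s s_mut) (sub_in2 sub_s s_indep).
set C := foldr _ B s.
have k_indep a : a \in s -> ent B a k = 0 /\ ent B k a = 0.
  by move=> aS; rewrite !s_indep ?mem_head ?in_cons ?aS ?orbT.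
have Cik : ent C i k = ent B i k.
  rewrite IH (negPf ks) orbF; case: ifP => [/k_indep[-> _]|_]; first by rewrite oppr0.
  by rewrite big_seq big1 ?addr0 // => a /k_indep[-> _]; rewrite mut_term0r.
have Ckj : ent C k j = ent B k j.
  rewrite IH (negPf ks) /=; case: ifP => [/k_indep[_ ->]|_]; first by rewrite oppr0.
  by rewrite big_seq big1 ?addr0 // => a /k_indep[_ ->]; rewrite mut_term0l.
rewrite ent_mutv ?s_mut ?mem_head // Cik Ckj !in_cons big_cons.
have [->|ik] /= := eqVneq i k; first by rewrite Ckj.
have [->|jk] /= := eqVneq j k; first by rewrite Cik orbT.
rewrite IH; have [iS|iS] /= := boolP (i \in s).
  by have [-> _] := k_indep i iS; rewrite mut_term0l addr0.
have [jS|jS] /= := boolP (j \in s).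
  by have [_ ->] := k_indep j jS; rewrite mut_term0r addr0.
by rewrite addrAC -addrA.
Qed.

Lemma ent_mutK {B : 'M[int]_(m, n)} {K : {set 'I_m}} :
  {in K, forall k : 'I_m, (k < n)%N} -> {in K &, forall a b, ent B a b = 0} ->
  forall i j, ent (mutK hnm B K) i j =
    if (i \in K) || (j \in K) then - ent B i j
    else ent B i j + \sum_(k in K) mut_term (ent B i k) (ent B k j).
Proof.
move=> K_mut K_indep i j; rewrite /mutK ent_foldr_mutv ?enum_uniq //.
- by rewrite !mem_enum big_enum.
- by move=> k; rewrite mem_enum; apply: K_mut.
- by move=> a b; rewrite !mem_enum; apply: K_indep.
Qed.

End MatrixMutation.

Lemma notin_orbit_neq {aT : finGroupType} {rT : finType} {to : {action aT &-> rT}}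
    {G : {group aT}} {x y z : rT} :
  x \in orbit to G y -> orbit to G y != orbit to G z -> x \notin orbit to G z.
Proof.
by move=> xy; apply: contraNN => xz; apply/eqP; rewrite -(orbit_eqP xy) (orbit_eqP xz).
Qed.

Section Admissible.

Context {n m : nat} {G : {group {perm 'I_m}}} {B : 'M[int]_(m, n)}.
Hypothesis admB : admissible G B.

Lemma mutable_orbit {i j : 'I_m} : j \in orbit 'P G i -> (j < n)%N = (i < n)%N.
Proof. by case: admB => perm_mut _ _ _ /orbitP[g gG <-]; apply: perm_mut. Qed.

Lemma ent_orbit0 {k : 'I_m} :
  (k < n)%N -> {in orbit 'P G k &, forall a b, ent B a b = 0}.
Proof.
case: admB => _ _ orbit_indep _ kn a b ak bk; apply: orbit_indep.
  by rewrite (mutable_orbit ak).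
by apply: orbit_trans bk _; rewrite orbit_sym.
Qed.

Lemma sign_coherent_ent {i0 j : 'I_m} :
  (j < n)%N -> sign_coherent (orbit 'P G i0) (ent B ^~ j).
Proof.
case: admB => _ _ _ orbit_coh jn a b ai bi; apply: orbit_coh jn.
by apply: orbit_trans bi _; rewrite orbit_sym.
Qed.

Lemma sum_ent_orbit_col (i0 : 'I_m) {k k' : 'I_m} :
  (k < n)%N -> k' \in orbit 'P G k ->
  \sum_(i in orbit 'P G i0) ent B i k' = \sum_(i in orbit 'P G i0) ent B i k.
Proof.
case: admB => _ ent_inv _ _ kn /orbitP[g gG <-].
rewrite (reindex_inj (@perm_inj _ g)); apply: eq_big => [i|i _].
  by rewrite -[g i]apermE orbit_actr.
by rewrite -ent_inv.
Qed.

End Admissible.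

Theorem lemma4p4p5 (n m : nat) (hnm : (n <= m)%N) (G : {group {perm 'I_m}})
  (B : 'M[int]_(m, n)) (k : 'I_m) :
  (k < n)%N ->
  admissible G B ->
  admissible G (mutK hnm B (orbit 'P G k)) ->
  forall I J : {set 'I_m},
    I \in orbitsG G -> J \in mut_orbitsG n G ->
    BG (mutK hnm B (orbit 'P G k)) I J
    = mutG (fun X Y : {set 'I_m} => X == Y) (BG B) (orbit 'P G k) I J.
Proof.
move=> kn admB _ I0 J0 /imsetP[i0 _ ->] /imsetP[j1]; rewrite inE => j1n -> {I0 J0}.
set K := orbit 'P G k; set I := orbit 'P G i0; set J := orbit 'P G j1.
rewrite /BG /mutG.
case: pickP => [j0 j0J|/(_ j1)]; last by rewrite orbit_refl.
case: pickP => [k0 k0K|/(_ k)] /=; last by rewrite orbit_refl.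
have j0n : (j0 < n)%N by rewrite (mutable_orbit admB j0J).
have K_mut : {in K, forall k' : 'I_m, (k' < n)%N} by move=> k' /(mutable_orbit admB)->.
under eq_bigr => i _ do rewrite (ent_mutK hnm K_mut (ent_orbit0 admB kn)).
have [IK|IK] /= := eqVneq I K.
  by rewrite -sumrN; apply: eq_bigr => i; rewrite IK => ->.
have [JK|JK] /= := eqVneq J K.
  by rewrite -sumrN; apply: eq_bigr => i _; rewrite -JK j0J orbT.
rewrite (negPf (notin_orbit_neq j0J JK)).
under eq_bigr => i iI do rewrite (negPf (notin_orbit_neq iI IK)) /=.
rewrite big_split /=; congr (_ + _); apply: sum_mut_term => //.
- by move=> k' k'K; rewrite !(sum_ent_orbit_col admB _ kn).
- by move=> k' /K_mut; exact: (sign_coherent_ent admB).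
- exact: (sign_coherent_ent admB j0n).
Qed.
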